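(* Let $K$ be a field, $\boldsymbol{\lambda}=(\lambda_1,\dots,\lambda_n)$ a vector of positive integers, and $M(\boldsymbol{\lambda})$ the monoid defined below. Then $I(\boldsymbol{\lambda})\subseteq K[x_1,\dots,x_n]$ is normal if and only if every minimal generator of $M(\boldsymbol{\lambda})$ of type (3) or (4) has $d=1$.
   Context: $I(\boldsymbol{\lambda})$ is the integral closure in $R=K[x_1,\dots,x_n]$ of $(x_1^{\lambda_1},\dots,x_n^{\lambda_n})$; an ideal is normal if all its positive powers are integrally closed. Let $M(\boldsymbol{\lambda})=\{(a_1,\dots,a_n,d)\in\mathbb{N}^{n+1}\mid a_1/\lambda_1+\cdots+a_n/\lambda_n\ge d\}$ (the exponent monoid of the integral closure of the Rees algebra $R[I(\boldsymbol{\lambda})t]$ in $R[t]$). A minimal generator of $M(\boldsymbol{\lambda})$ is a nonzero element that cannot be written as the sum of two nonzero elements of $M(\boldsymbol{\lambda})$. A minimal generator $(a_1,\dots,a_n,d)$ is of type (3) if $a_n=0$, $d>0$ and $a_ia_j>0$ for some $1\le i<j<n$; it is of type (4) if $d>0$ and $a_ia_n>0$ for some $1\le i<n$. *)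

From HB Require Import structures.
From mathcomp Require Import all_boot all_order all_algebra.
From mathcomp Require Import mpoly.
Set Implicit Arguments. Unset Strict Implicit. Unset Printing Implicit Defensive.
Import Order.TTheory GRing.Theory Num.Theory.
Local Open Scope ring_scope.

Definition gen_ideal (R : comNzRingType) (S : R -> Prop) : R -> Prop :=
  fun f => exists s : seq (R * R),
    (forall p, p \in s -> S p.2) /\ f = \sum_(p <- s) p.1 * p.2.

Definition ideal_pow (R : comNzRingType) (I : R -> Prop) (k : nat) : R -> Prop :=
  gen_ideal (fun g => exists s : seq R,
    size s = k /\ (forall x, x \in s -> I x) /\ g = \prod_(x <- s) x).

Definition int_closure (R : comNzRingType) (I : R -> Prop) : R -> Prop :=
  fun f => exists (m : nat) (a : nat -> R),
    (0 < m)%N /\ (forall i, (1 <= i <= m)%N -> ideal_pow I i (a i)) /\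
    f ^+ m + \sum_(1 <= i < m.+1) a i * f ^+ (m - i) = 0.

Definition integrally_closed (R : comNzRingType) (I : R -> Prop) : Prop :=
  forall f, int_closure I f -> I f.

Definition normal_ideal (R : comNzRingType) (I : R -> Prop) : Prop :=
  forall k, (0 < k)%N -> integrally_closed (ideal_pow I k).

Definition Ilam (K : fieldType) (n : nat) (lam : 'I_n -> nat) : {mpoly K[n]} -> Prop :=
  @int_closure _ (gen_ideal (fun g : {mpoly K[n]} => exists i : 'I_n, g = 'X_i ^+ lam i)).

(* Elements (a_1,...,a_n,d) of N^(n+1). *)
Definition vecN (n : nat) := ({ffun 'I_n -> nat} * nat)%type.
Arguments Ilam K {n} lam.


Definition inM (n : nat) (lam : 'I_n -> nat) (v : vecN n) : Prop :=
  (v.2%:R <= \sum_(i < n) (v.1 i)%:R / (lam i)%:R :> rat).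

Definition vadd (n : nat) (u v : vecN n) : vecN n :=
  ([ffun i => u.1 i + v.1 i]%N, (u.2 + v.2)%N).

Definition vzero (n : nat) : vecN n := ([ffun=> 0%N], 0%N).

Definition min_gen (n : nat) (lam : 'I_n -> nat) (v : vecN n) : Prop :=
  inM lam v /\ v <> vzero n /\
  ~ (exists u w : vecN n, inM lam u /\ inM lam w /\ u <> vzero n /\
       w <> vzero n /\ v = vadd u w).

(* Type (3): a_n = 0, d > 0, a_i a_j > 0 for some 1 <= i < j < n.
   (Indices are 0-based: the last coordinate a_n is the one of index n-1.) *)
Definition type3 (n : nat) (v : vecN n) : Prop :=
  (exists k : 'I_n, val k = n.-1 /\ v.1 k = 0%N) /\ (0 < v.2)%N /\
  exists i j : 'I_n, (val i < val j)%N /\ (val j < n.-1)%N /\ (0 < v.1 i * v.1 j)%N.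

Definition type4 (n : nat) (v : vecN n) : Prop :=
  (0 < v.2)%N /\
  exists i k : 'I_n, val k = n.-1 /\ (val i < val k)%N /\ (0 < v.1 i * v.1 k)%N.

From HB Require Import structures.
From mathcomp Require Import all_boot all_order all_algebra.
From mathcomp Require Import mpoly.
From Stdlib Require Import Classical.
From mathcomp Require Import zify.
Set Implicit Arguments. Unset Strict Implicit. Unset Printing Implicit Defensive.
Import Order.TTheory GRing.Theory Num.Theory.
Local Open Scope ring_scope.

(* All ideals involved are monomial.  Give x_i the weight prod_(j != i) lam_j, so that (a, d)
   lies in M(lam) iff the weighted degree of x^a is at least d * prod_j lam_j.  The weighted
   order is a valuation, so everything integral over I(lam)^k has only monomials of weighted
   degree >= k * prod_j lam_j, and each such monomial is integral over I(lam)^k; on the other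
   hand x^a lies in I(lam)^k iff (a, k) is a sum of k elements of M(lam) of degree one and one
   of degree zero.  Hence I(lam) is normal iff every element of M(lam) decomposes in this way.
   Decomposability is additive, so only minimal generators matter: those with d <= 1 or with a
   single nonzero a_i decompose, one with d >= 2 never does, and a minimal generator with
   d >= 2 and two nonzero a_i is of type (3) or (4). *)

Section IdealOperations.

Variable R : comNzRingType.
Implicit Types (S J : R -> Prop) (r x y : R).

Lemma gen_ideal_ind S (P : R -> Prop) :
  P 0 -> (forall x y, P x -> P y -> P (x + y)) ->
  (forall r x, S x -> P (r * x)) -> forall x, gen_ideal S x -> P x.
Proof.
move=> P0 PD PM _ [s [Ss ->]]; elim: s Ss => [|[r x] s IHs] Ss; first by rewrite big_nil.
rewrite big_cons; apply: PD; first by apply/PM/(Ss (r, x)); rewrite inE eqxx.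
by apply: IHs => p ps; apply: Ss; rewrite inE ps orbT.
Qed.

Lemma gen_ideal0 S : gen_ideal S 0.
Proof. by exists [::]; rewrite big_nil. Qed.

Lemma gen_idealD S x y : gen_ideal S x -> gen_ideal S y -> gen_ideal S (x + y).
Proof.
move=> [s [Ss ->]] [t [St ->]]; exists (s ++ t); split; last by rewrite big_cat.
by move=> p; rewrite mem_cat => /orP[/Ss|/St].
Qed.

Lemma gen_idealM S r x : gen_ideal S x -> gen_ideal S (r * x).
Proof.
move=> [s [Ss ->]]; exists (map (fun p => (r * p.1, p.2)) s); split.
  by move=> q /mapP[p ps ->] /=; apply: Ss.
by rewrite big_map mulr_sumr; apply: eq_bigr => p _; rewrite mulrA.
Qed.

Lemma gen_idealS S x : S x -> gen_ideal S x.
Proof.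
by move=> Sx; exists [:: (1, x)]; rewrite big_seq1 mul1r; split=> // p /[1!inE] /eqP->.
Qed.

Lemma gen_ideal_sum S (I : eqType) (s : seq I) (F : I -> R) :
  (forall i, i \in s -> gen_ideal S (F i)) -> gen_ideal S (\sum_(i <- s) F i).
Proof.
elim: s => [|i s IHs] SF; first by rewrite big_nil; apply: gen_ideal0.
rewrite big_cons; apply: gen_idealD; first by apply: SF; rewrite inE eqxx.
by apply: IHs => j js; apply: SF; rewrite inE js orbT.
Qed.

Definition prod_set J k : R -> Prop :=
  fun x => exists s : seq R,
    size s = k /\ (forall y, y \in s -> J y) /\ x = \prod_(y <- s) y.

Lemma prod_set_mono J1 J2 k x :
  (forall y, J1 y -> J2 y) -> prod_set J1 k x -> prod_set J2 k x.
Proof. by move=> J12 [s [sk [Js ->]]]; exists s; split=> //; split=> // y /Js/J12. Qed.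

Lemma prod_set1 J x : J x -> prod_set J 1 x.
Proof.
by move=> Jx; exists [:: x]; rewrite big_seq1; split=> //; split=> // y /[1!inE] /eqP->.
Qed.

Lemma prod_set1_inv J x : prod_set J 1 x -> J x.
Proof.
case=> s [s1 [Js ->]]; case: s s1 Js => [|y [|]] // _ Js.
by rewrite big_seq1; apply: Js; rewrite inE.
Qed.

Lemma prod_setM J k l x y : prod_set J k x -> prod_set J l y -> prod_set J (k + l) (x * y).
Proof.
move=> [s [<- [Js ->]]] [t [<- [Jt ->]]]; exists (s ++ t); rewrite size_cat big_cat.
by split=> //; split=> // z; rewrite mem_cat => /orP[/Js|/Jt].
Qed.

Lemma prod_set_split J k l x :
  prod_set J (k + l) x -> exists2 y, prod_set J k y & exists2 z, prod_set J l z & x = y * z.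
Proof.
move=> [s [sz [Js ->]]]; rewrite -(cat_take_drop k s) big_cat.
exists (\prod_(y <- take k s) y).
  exists (take k s); rewrite size_takel ?sz ?leq_addr //.
  by split=> //; split=> // y /mem_take/Js.
exists (\prod_(y <- drop k s) y) => //.
by exists (drop k s); rewrite size_drop sz addKn; split=> //; split=> // y /mem_drop/Js.
Qed.

Lemma prod_set_regroup J k l x : prod_set J (k * l) x -> prod_set (prod_set J k) l x.
Proof.
elim: l x => [|l IHl] x.
  by rewrite muln0 => -[s [/size0nil-> [_ ->]]]; exists [::].
rewrite mulnS => /prod_set_split [y Jy [z /IHl Jz ->]].
by rewrite -[l.+1]/(1 + l)%N; apply: prod_setM => //; apply: prod_set1.
Qed.

Lemma int_closureS J x : J x -> int_closure J x.
Proof.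
move=> Jx; exists 1%N, (fun=> - x); split=> //; split.
  move=> i /andP[i_ge1 i_le1]; have -> : i = 1%N by apply/eqP; rewrite eqn_leq i_le1.
  by rewrite -mulN1r; apply/gen_idealM/gen_idealS/prod_set1.
by rewrite big_nat1 subnn expr0 mulr1 expr1 addrN.
Qed.

End IdealOperations.

Section ExponentMonoid.

Variables (n : nat) (lam : 'I_n -> nat).
Implicit Types (a : 'I_n -> nat) (v : vecN n).

(* [wdeg a = lamprod * (a_1 / lam_1 + ... + a_n / lam_n)], see [inM_wdeg]. *)
Definition lamprod : nat := \prod_(j < n) lam j.
Definition lamcof (i : 'I_n) : nat := \prod_(j < n | j != i) lam j.
Definition wdeg a : nat := \sum_(i < n) a i * lamcof i.

Lemma lam_lamcof i : (lam i * lamcof i)%N = lamprod.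
Proof. by rewrite /lamprod (bigD1 i). Qed.

Lemma eq_wdeg a1 a2 : a1 =1 a2 -> wdeg a1 = wdeg a2.
Proof. by move=> a12; apply: eq_bigr => i _; rewrite a12. Qed.

Lemma wdegD a1 a2 : wdeg (fun i => a1 i + a2 i)%N = (wdeg a1 + wdeg a2)%N.
Proof. by rewrite /wdeg -big_split; apply: eq_bigr => i _; rewrite mulnDl. Qed.

Lemma wdeg_sum (I : Type) (s : seq I) (F : I -> 'I_n -> nat) :
  wdeg (fun i => \sum_(x <- s) F x i)%N = (\sum_(x <- s) wdeg (F x))%N.
Proof.
rewrite /wdeg (exchange_big_dep xpredT) //=.
by apply: eq_bigr => i _; rewrite big_distrl.
Qed.

Lemma wdeg_single a i : (forall j, j != i -> a j = 0%N) -> wdeg a = (a i * lamcof i)%N.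
Proof. by move=> a0; rewrite /wdeg (bigD1 i) //= big1 ?addn0 // => j /a0->. Qed.

(* For a monomial x^a this is membership in I(lam)^d, by [ideal_pow_Ilam_mX] and
   [msupp_ideal_pow_deg1_decomposable]. *)
Definition deg1_decomposable a (d : nat) : Prop :=
  exists (c : 'I_n -> nat) (bs : seq 'X_{1..n}),
    [/\ size bs = d, forall b, b \in bs -> (lamprod <= wdeg b)%N
      & forall i, a i = (c i + \sum_(b <- bs) b i)%N].

Lemma eq_deg1_decomposable a1 a2 d :
  a1 =1 a2 -> deg1_decomposable a1 d -> deg1_decomposable a2 d.
Proof. by move=> a12 [c [bs [bs_d bs_wdeg a1E]]]; exists c, bs; split=> // i; rewrite -a12. Qed.

Lemma deg1_decomposable_le a (bs : seq 'X_{1..n}) :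
  (forall b, b \in bs -> (lamprod <= wdeg b)%N) ->
  (forall i, \sum_(b <- bs) b i <= a i)%N -> deg1_decomposable a (size bs).
Proof.
move=> bs_wdeg bs_le; exists (fun i => a i - \sum_(b <- bs) b i)%N, bs.
by split=> // i; rewrite subnK.
Qed.

Lemma deg1_decomposable0 a : deg1_decomposable a 0.
Proof. by apply: (@deg1_decomposable_le a [::]) => // i; rewrite big_nil. Qed.

Lemma deg1_decomposableD a1 a2 d1 d2 :
  deg1_decomposable a1 d1 -> deg1_decomposable a2 d2 ->
  deg1_decomposable (fun i => a1 i + a2 i)%N (d1 + d2).
Proof.
move=> [c1 [bs1 [<- bs1_wdeg a1E]]] [c2 [bs2 [<- bs2_wdeg a2E]]].
exists (fun i => c1 i + c2 i)%N, (bs1 ++ bs2); split.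
- by rewrite size_cat.
- by move=> b; rewrite mem_cat => /orP[/bs1_wdeg|/bs2_wdeg].
- by move=> i; rewrite a1E a2E big_cat /=; lia.
Qed.

Definition vsize v : nat := (\sum_(i < n) v.1 i + v.2)%N.

Lemma vsizeD u w : vsize (vadd u w) = (vsize u + vsize w)%N.
Proof.
rewrite /vsize /= (eq_bigr (fun i => u.1 i + w.1 i)%N) => [|i _]; last by rewrite ffunE.
by rewrite big_split /=; lia.
Qed.

Lemma vsize_eq0 v : vsize v = 0%N -> v = vzero n.
Proof.
case: v => a d /eqP; rewrite /vsize addn_eq0 sum_nat_eq0 => /andP[/forallP a0 /eqP /= ->].
by congr (_, _); apply/ffunP => i; rewrite ffunE; apply/eqP/(implyP (a0 i)).
Qed.

Lemma inM_ind (P : vecN n -> Prop) :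
  P (vzero n) -> (forall u w, P u -> P w -> P (vadd u w)) ->
  (forall v, min_gen lam v -> P v) -> forall v, inM lam v -> P v.
Proof.
move=> P0 PD Pmin v; elim: {v}(vsize v) {-2}v (leqnn (vsize v)) => [|N IHN] v v_size Mv.
  by move: v_size; rewrite leqn0 => /eqP/vsize_eq0->.
have [->|v0] := classic (v = vzero n); first exact: P0.
have [|not_split] := classic (exists u w, inM lam u /\ inM lam w /\ u <> vzero n /\
                                          w <> vzero n /\ v = vadd u w); last first.
  by apply: Pmin; split=> //; split.
move=> [u [w [Mu [Mw [u0 [w0 vE]]]]]].
have u_size : (0 < vsize u)%N by rewrite lt0n; apply/eqP => /vsize_eq0.
have w_size : (0 < vsize w)%N by rewrite lt0n; apply/eqP => /vsize_eq0.
move: v_size; rewrite vE vsizeD => uw_size.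
by apply: PD; apply: IHN => //; lia.
Qed.

Lemma wdeg_pure_power i : wdeg (U_(i) *+ lam i)%MM = lamprod.
Proof.
rewrite (@wdeg_single _ i) => [|j ji]; last by rewrite mulmnE mnm1E eq_sym (negbTE ji).
by rewrite mulmnE mnm1E eqxx mul1n lam_lamcof.
Qed.

Lemma types34_of_pair v (i j : 'I_n) :
  (i < j)%N -> (0 < v.1 i)%N -> (0 < v.1 j)%N -> (0 < v.2)%N -> type3 v \/ type4 v.
Proof.
move=> lt_ij ai aj d_gt0; have aij : (0 < v.1 i * v.1 j)%N by rewrite muln_gt0 ai aj.
have n_gt0 : (0 < n)%N := leq_ltn_trans (leq0n _) (ltn_ord j).
have lt_last : (n.-1 < n)%N by rewrite prednK.
pose k := Ordinal lt_last.
have [j_last|j_not_last] := eqVneq (val j) n.-1.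
  by right; split=> //; exists i, j.
have lt_jk : (val j < n.-1)%N by rewrite ltn_neqAle j_not_last -ltnS prednK ?ltn_ord.
have [ak0|ak_gt0] := eqVneq (v.1 k) 0%N.
  by left; split; [exists k | split=> //; exists i, j].
right; split=> //; exists i, k; split=> //; split; first exact: ltn_trans lt_jk.
by rewrite muln_gt0 ai lt0n ak_gt0.
Qed.

Hypothesis lam_gt0 : forall i, (0 < lam i)%N.

Lemma lamprod_gt0 : (0 < lamprod)%N.
Proof. exact: prodn_gt0. Qed.

Lemma lamcof_gt0 i : (0 < lamcof i)%N.
Proof. exact: prodn_cond_gt0. Qed.

Lemma inM_wdeg v : inM lam v <-> (v.2 * lamprod <= wdeg v.1)%N.
Proof.
have sumE : (\sum_(i < n) (v.1 i)%:R / (lam i)%:R) * lamprod%:R = (wdeg v.1)%:R :> rat.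
  rewrite mulr_suml /wdeg natr_sum; apply: eq_bigr => i _.
  by rewrite -(lam_lamcof i) !natrM mulrA divfK // pnatr_eq0 -lt0n.
have lamprod_pos : (0 : rat) < lamprod%:R by rewrite ltr0n lamprod_gt0.
by rewrite /inM -(ler_pM2r lamprod_pos) sumE -natrM ler_nat.
Qed.

Lemma min_gen_deg1_decomposable_le1 v :
  min_gen lam v -> deg1_decomposable v.1 v.2 -> (v.2 <= 1)%N.
Proof.
case: v => a d [_ [_ no_split]] [c [bs [/= bs_d bs_wdeg aE]]]; subst d.
case: bs bs_wdeg aE no_split => [|b1 [|b2 bs]] // bs_wdeg aE no_split.
exfalso; apply: no_split.
exists ([ffun i => c i + b1 i]%N, 1%N).
exists ([ffun i => \sum_(b <- b2 :: bs) b i]%N, (size bs).+1).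
split.
  apply/inM_wdeg; rewrite mul1n (eq_wdeg (ffunE _)) wdegD.
  by apply: leq_trans (leq_addl _ _); apply/bs_wdeg/mem_head.
split.
  apply/inM_wdeg; rewrite (eq_wdeg (ffunE _)) wdeg_sum.
  rewrite -[X in (X * _)%N]/(size (b2 :: bs)) -sum1_size big_distrl /=.
  rewrite big_seq [X in (_ <= X)%N]big_seq; apply: leq_sum => b b_bs.
  by rewrite mul1n; apply/bs_wdeg/mem_behead.
split; first by case.
split; first by case.
by congr (_, _); apply/ffunP => i; rewrite !ffunE aE !big_cons; lia.
Qed.

Lemma inM_deg1_decomposable_le1 v :
  inM lam v -> (v.2 <= 1)%N -> deg1_decomposable v.1 v.2.
Proof.
case: v => a [|[|//]] /= Mv _; first exact: deg1_decomposable0.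
apply: (@deg1_decomposable_le _ [:: [multinom a i | i < n]]) => [b|i].
  by rewrite inE => /eqP->; move/inM_wdeg: Mv; rewrite mul1n (eq_wdeg (mnmE _)).
by rewrite big_seq1 mnmE.
Qed.

Lemma single_support_deg1_decomposable v i :
  inM lam v -> (forall j, j != i -> v.1 j = 0%N) -> deg1_decomposable v.1 v.2.
Proof.
move=> /inM_wdeg + a0; rewrite (wdeg_single a0) -(lam_lamcof i) mulnA.
rewrite leq_pmul2r ?lamcof_gt0 // => le_a.
rewrite -[v.2](size_nseq _ (U_(i) *+ lam i)%MM).
apply: deg1_decomposable_le => [b|j].
  by rewrite mem_nseq => /andP[_ /eqP->]; rewrite wdeg_pure_power.
rewrite big_nseq iter_addn_0 mulmnE mnm1E.
by case: eqVneq => [<-|_] /=; rewrite ?mul1n ?mul0n 1?mulnC.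
Qed.

Lemma min_gen_deg1_decomposable v :
  (forall v, min_gen lam v -> type3 v \/ type4 v -> v.2 = 1%N) ->
  min_gen lam v -> deg1_decomposable v.1 v.2.
Proof.
move=> types_deg1 v_min; have Mv := v_min.1.
have [d_le1|d_gt1] := leqP v.2 1; first exact: inM_deg1_decomposable_le1.
have [[i [j [lt_ij ai aj]]]|no_pair] :=
  classic (exists i j : 'I_n, [/\ (i < j)%N, (0 < v.1 i)%N & (0 < v.1 j)%N]).
  by have := types_deg1 v v_min (types34_of_pair lt_ij ai aj (ltnW d_gt1)); lia.
have [i ai|no_supp] := pickP (fun i => 0 < v.1 i)%N; last first.
  move/inM_wdeg: Mv; rewrite /wdeg big1 => [|i _]; last first.
    by move/negbT: (no_supp i); rewrite lt0n negbK => /eqP->.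
  by rewrite leqn0 muln_eq0 (negbTE (lt0n_neq0 lamprod_gt0)) orbF; lia.
apply: (single_support_deg1_decomposable Mv (i := i)) => j ji.
apply/eqP; rewrite -leqn0 leqNgt; apply/negP => aj; apply: no_pair.
by move: ji; rewrite -(inj_eq val_inj) neq_ltn => /orP[lt_ji|lt_ij]; [exists j, i | exists i, j].
Qed.

Lemma deg1_decomposableP :
  (forall a d, (d * lamprod <= wdeg a)%N -> deg1_decomposable a d) <->
  (forall v, min_gen lam v -> type3 v \/ type4 v -> v.2 = 1%N).
Proof.
split=> [decomp v v_min types34 | types_deg1 a d le_a].
  have d_gt0 : (0 < v.2)%N by case: types34 => [[_ []]|[]].
  have := min_gen_deg1_decomposable_le1 v_min (decomp _ _ (proj1 (inM_wdeg _) v_min.1)); lia.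
pose v : vecN n := ([ffun i => a i], d).
have Mv : inM lam v by apply/inM_wdeg; rewrite (eq_wdeg (ffunE _)).
apply: eq_deg1_decomposable (ffunE _) _.
apply: (@inM_ind (fun v => deg1_decomposable v.1 v.2) _ _ _ v Mv) => [|u w|w].
- exact: deg1_decomposable0.
- by move=> /deg1_decomposableD dec_u /dec_u; apply: eq_deg1_decomposable => i; rewrite ffunE.
- exact: min_gen_deg1_decomposable.
Qed.

End ExponentMonoid.

Section WeightedOrder.

Variables (K : fieldType) (n : nat) (lam : 'I_n -> nat).
Local Notation R := {mpoly K[n]}.
Implicit Types (p q f x : R) (J : R -> Prop) (m : 'X_{1..n}).

(* Substituting x_i T^(lamcof i) for x_i multiplies each monomial x^m by T^(wdeg m), so
   [worder_ge t p] holds iff all monomials of p have weighted degree at least t; phrased as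
   divisibility by T^t in a domain it is visibly a valuation. *)
Definition wsubst : {rmorphism R -> {poly R}} :=
  mmap (polyC \o mpolyC n (R:=K)) (fun i => ('X_i)%:P * 'X^(lamcof lam i)).

Lemma wsubst_mX m : wsubst 'X_[m] = ('X_[m])%:P * 'X^(wdeg lam m).
Proof.
rewrite /= mmapX /mmap1.
rewrite (eq_bigr (fun i => ('X_i ^+ m i)%:P * 'X^(lamcof lam i * m i))) => [|i _]; last first.
  by rewrite exprMn rmorphXn /= exprM.
rewrite big_split /= -rmorph_prod -mpolyXE_id prodrXr; congr (_ * 'X^_).
by apply: eq_bigr => i _; rewrite mulnC.
Qed.

Lemma wsubstE p : wsubst p = \sum_(m <- msupp p) (p@_m *: 'X_[m])%:P * 'X^(wdeg lam m).
Proof.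
rewrite {1}[p]mpolyE rmorph_sum; apply: eq_bigr => m _.
by rewrite -mul_mpolyC rmorphM wsubst_mX /= mmapC mulrA -polyCM.
Qed.

Definition worder_ge (t : nat) p := exists Q, wsubst p = 'X^t * Q.

Lemma worder_ge_msupp t p m : worder_ge t p -> m \in msupp p -> (t <= wdeg lam m)%N.
Proof.
move=> [Q pQ] m_supp; rewrite leqNgt; apply/negP => lt_mt.
have := congr1 (fun P : {poly R} => (P`_(wdeg lam m))@_m) pQ.
rewrite /= coefXnM lt_mt mcoeff0 wsubstE coef_sum.
rewrite (bigD1_seq m) //= ?msupp_uniq // coefCM coefXn eqxx mulr1.
rewrite mcoeffD mcoeffZ mcoeffX eqxx mulr1 (raddf_sum (mcoeff m)) /=.
rewrite big1_seq ?addr0 => [|m' /andP[m'_neq _]].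
  by move/eqP; rewrite mcoeff_eq0 m_supp.
rewrite coefCM coefXn; case: eqP => _; rewrite ?mulr0 ?mcoeff0 // mulr1.
by rewrite mcoeffZ mcoeffX (negbTE m'_neq) mulr0.
Qed.

Lemma worder_ge0 p : worder_ge 0 p.
Proof. by exists (wsubst p); rewrite expr0 mul1r. Qed.

Lemma worder_ge_zero t : worder_ge t 0.
Proof. by exists 0; rewrite rmorph0 mulr0. Qed.

Lemma worder_geD t p q : worder_ge t p -> worder_ge t q -> worder_ge t (p + q).
Proof. by move=> [P pP] [Q qQ]; exists (P + Q); rewrite rmorphD pP qQ mulrDr. Qed.

Lemma worder_geN t p : worder_ge t p -> worder_ge t (- p).
Proof. by move=> [P pP]; exists (- P); rewrite rmorphN pP mulrN. Qed.

Lemma worder_geM t u p q : worder_ge t p -> worder_ge u q -> worder_ge (t + u) (p * q).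
Proof.
move=> [P pP] [Q qQ]; exists (P * Q).
by rewrite rmorphM pP qQ exprD mulrACA.
Qed.

Lemma worder_geMl t p q : worder_ge t q -> worder_ge t (p * q).
Proof. exact: worder_geM (worder_ge0 p). Qed.

Lemma worder_geX t p k : worder_ge t p -> worder_ge (k * t) (p ^+ k).
Proof.
move=> p_t; elim: k => [|k IHk]; first exact: worder_ge0.
by rewrite exprS mulSn; apply: worder_geM.
Qed.

Lemma worder_ge_le t u p : (u <= t)%N -> worder_ge t p -> worder_ge u p.
Proof. by move=> le_ut [P pP]; exists ('X^(t - u) * P); rewrite pP mulrA -exprD subnKC. Qed.

Lemma worder_ge_sum t (I : eqType) (s : seq I) (F : I -> R) :
  (forall i, i \in s -> worder_ge t (F i)) -> worder_ge t (\sum_(i <- s) F i).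
Proof.
elim: s => [|i s IHs] F_t; first by rewrite big_nil; apply: worder_ge_zero.
rewrite big_cons; apply: worder_geD; first by apply: F_t; rewrite inE eqxx.
by apply: IHs => j js; apply: F_t; rewrite inE js orbT.
Qed.

Lemma worder_ge_gen_ideal t S f :
  (forall x, S x -> worder_ge t x) -> gen_ideal S f -> worder_ge t f.
Proof.
move=> S_t; apply: gen_ideal_ind => [|x y|r x /S_t].
- exact: worder_ge_zero.
- exact: worder_geD.
- exact: worder_geMl.
Qed.

Lemma worder_ge_prod_set t J k f :
  (forall x, J x -> worder_ge t x) -> prod_set J k f -> worder_ge (k * t) f.
Proof.
move=> J_t [s [<- [s_J ->]]]; elim: s s_J => [|x s IHs] s_J; first exact: worder_ge0.
rewrite big_cons mulSn; apply: worder_geM; first by apply/J_t/s_J/mem_head.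
by apply: IHs => y ys; apply: s_J; rewrite inE ys orbT.
Qed.

Lemma worder_ge_ideal_pow t J k f :
  (forall x, J x -> worder_ge t x) -> ideal_pow J k f -> worder_ge (k * t) f.
Proof. by move=> J_t; apply: worder_ge_gen_ideal => x; apply: worder_ge_prod_set. Qed.

(* If wsubst f = T^e Q with e < t, the integral equation makes T divide Q^m, hence Q. *)
Lemma worder_ge_int_closure t J f :
  (forall x, J x -> worder_ge t x) -> int_closure J f -> worder_ge t f.
Proof.
move=> J_t [m [a [m_gt0 [a_pow f_root]]]].
suff f_ord e : (e <= t)%N -> worder_ge e f by apply: f_ord.
elim: e => [|e IHe] lt_et; first exact: worder_ge0.
have [Q fQ] := IHe (ltnW lt_et).
have [S fmS] : worder_ge (m * e).+1 (f ^+ m).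
  have -> : f ^+ m = - \sum_(1 <= i < m.+1) a i * f ^+ (m - i).
    by apply/eqP; rewrite -addr_eq0 f_root.
  apply/worder_geN/worder_ge_sum => i; rewrite mem_index_iota => /andP[i_ge1 i_le].
  rewrite (_ : (m * e).+1 = (i * e).+1 + (m - i) * e)%N; last by rewrite addSn -mulnDl subnKC.
  apply: worder_geM; last by apply: worder_geX; exists Q.
  apply: worder_ge_le (worder_ge_ideal_pow J_t (a_pow i _)); last by rewrite i_ge1.
  by nia.
move: fmS; rewrite rmorphXn fQ exprMn -exprM mulnC exprS (mulrC 'X) -mulrA => fmS.
have QmS : Q ^+ m = 'X * S.
  apply: (mulfI (x := 'X^(m * e))); last by rewrite fmS.
  by rewrite expf_neq0 // polyX_eq0.
have : root Q 0.
  have := congr1 (horner^~ 0) QmS; rewrite /= horner_exp hornerM hornerX mul0r.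
  by move/eqP; rewrite expf_eq0 => /andP[_].
move/factor_theorem => [P QP]; exists P.
by rewrite fQ QP subr0 exprSr -mulrA (mulrC P).
Qed.

Lemma msupp_prod_deg1_decomposable (s : seq R) m :
  (forall y, y \in s -> worder_ge (lamprod lam) y) ->
  m \in msupp (\prod_(y <- s) y) -> deg1_decomposable lam m (size s).
Proof.
elim: s m => [|y s IHs] m s_ord.
  rewrite big_nil msupp1 inE => /eqP->.
  by apply: eq_deg1_decomposable (deg1_decomposable0 _ _) => i; rewrite mnm0E.
rewrite big_cons => /msuppM_le /allpairsP[[m1 m2] /= [m1_y m2_s ->]].
apply: eq_deg1_decomposable (fun i => esym (mnmDE i m1 m2)) _.
apply: (@deg1_decomposableD _ _ _ _ 1%N); last first.
  by apply: IHs m2_s => z zs; apply/s_ord/mem_behead.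
apply: (@deg1_decomposable_le _ _ _ [:: m1]) => [b|i]; last by rewrite big_seq1.
by rewrite inE => /eqP->; apply: worder_ge_msupp m1_y; apply/s_ord/mem_head.
Qed.

Lemma msupp_ideal_pow_deg1_decomposable J k x m :
  (forall y, J y -> worder_ge (lamprod lam) y) ->
  ideal_pow J k x -> m \in msupp x -> deg1_decomposable lam m k.
Proof.
move=> J_ord x_pow; move: x x_pow m.
apply: (@gen_ideal_ind _ _ (fun x => forall m, m \in msupp x -> deg1_decomposable lam m k)).
- by move=> m; rewrite msupp0.
- by move=> x y x_dec y_dec m /msuppD_le; rewrite mem_cat => /orP[/x_dec|/y_dec].
move=> r _ [s [<- [s_J ->]]] m /msuppM_le /allpairsP[[m1 m2] /= [_ m2_s ->]].
apply: eq_deg1_decomposable (fun i => esym (mnmDE i m1 m2)) _.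
apply: (@deg1_decomposableD _ _ _ _ 0%N); first exact: deg1_decomposable0.
by apply: msupp_prod_deg1_decomposable m2_s => y /s_J /J_ord.
Qed.

End WeightedOrder.

Section IlamMonomials.

Variables (K : fieldType) (n : nat) (lam : 'I_n -> nat).
Local Notation R := {mpoly K[n]}.
Implicit Types (f x : R) (J : R -> Prop) (m : 'X_{1..n}).

Definition pure_powers : R -> Prop := fun g => exists i, g = 'X_i ^+ lam i.

Lemma worder_ge_pure_power i : worder_ge lam (lamprod lam) ('X_i ^+ lam i : R).
Proof.
by exists ('X_[U_(i) *+ lam i])%:P; rewrite mpolyXn wsubst_mX wdeg_pure_power mulrC.
Qed.

Lemma worder_ge_Ilam f : Ilam K lam f -> worder_ge lam (lamprod lam) f.
Proof.
apply: worder_ge_int_closure => x; apply: worder_ge_gen_ideal => _ [i ->].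
exact: worder_ge_pure_power.
Qed.

Lemma Ilam_pure_power i : Ilam K lam ('X_i ^+ lam i).
Proof. by apply/int_closureS/gen_idealS; exists i. Qed.

Hypothesis lam_gt0 : forall i, (0 < lam i)%N.

Lemma prod_set_pure_powers_mX m :
  prod_set pure_powers (wdeg lam m) 'X_[m *+ lamprod lam].
Proof.
rewrite mpolyXE_id /wdeg.
rewrite (eq_bigr (fun i => ('X_i ^+ lam i) ^+ (m i * lamcof lam i))) => [|i _]; last first.
  by rewrite mulmnE -exprM -(lam_lamcof lam i) mulnCA.
elim/big_rec2: _ => [|i k x _ x_prod]; first by exists [::]; rewrite big_nil.
apply: prod_setM x_prod; elim: (m i * lamcof lam i)%N => [|l IHl].
  by exists [::]; rewrite big_nil expr0.
by rewrite exprS -add1n; apply: prod_setM IHl; apply: prod_set1; exists i.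
Qed.

(* x^m is a root of Z^lamprod - x^(m lamprod), and x^(m lamprod) is a product of
   [wdeg m >= d lamprod] pure powers. *)
Lemma int_closure_mX J d m :
  (forall x, prod_set pure_powers d x -> J x) -> (d * lamprod lam <= wdeg lam m)%N ->
  int_closure J 'X_[m].
Proof.
move=> J_prod le_dm.
have J_pow : ideal_pow J (lamprod lam) ('X_[m] ^+ lamprod lam).
  have := prod_set_pure_powers_mX m; rewrite mpolyXn -(subnKC le_dm).
  move=> /prod_set_split [y /prod_set_regroup y_prod [z _ ->]].
  by rewrite mulrC; apply/gen_idealM/gen_idealS; apply: prod_set_mono y_prod.
exists (lamprod lam), (fun i => if i == lamprod lam then - 'X_[m] ^+ lamprod lam else 0).
split; first exact: lamprod_gt0.
split=> [i _|].
  by case: eqP => [->|_]; [rewrite -mulN1r; apply: gen_idealM | exact: gen_ideal0].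
rewrite big_nat_recr ?lamprod_gt0 //= eqxx subnn expr0 mulr1 big1_seq ?add0r ?addrN //.
by move=> i /andP[_]; rewrite mem_index_iota => /andP[_ lt_i]; rewrite (ltn_eqF lt_i) mul0r.
Qed.

Lemma Ilam_mX m : (lamprod lam <= wdeg lam m)%N -> Ilam K lam 'X_[m].
Proof.
rewrite -[lamprod lam]mul1n; apply: int_closure_mX => x /prod_set1_inv.
exact: gen_idealS.
Qed.

Lemma ideal_pow_Ilam_mX k m : deg1_decomposable lam m k -> ideal_pow (Ilam K lam) k 'X_[m].
Proof.
move=> [c [bs [<- bs_wdeg mE]]].
have -> : m = ([multinom c i | i < n] + \sum_(b <- bs) b)%MM.
  by apply/mnmP => i; rewrite mnmDE mnm_sumE mnmE mE.
rewrite mpolyXD -mprodXE; apply/gen_idealM/gen_idealS.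
exists (map (fun b => 'X_[b]) bs); rewrite size_map big_map; split=> //; split=> //.
by move=> _ /mapP[b b_bs ->]; apply/Ilam_mX/bs_wdeg.
Qed.

Lemma normal_IlamP :
  normal_ideal (Ilam K lam) <->
  forall a d, (d * lamprod lam <= wdeg lam a)%N -> deg1_decomposable lam a d.
Proof.
split=> [normal a [|d] le_da | decomp k k_gt0 f f_cl]; first exact: deg1_decomposable0.
  pose m := [multinom a i | i < n].
  have : int_closure (ideal_pow (Ilam K lam) d.+1) 'X_[m].
    apply: (int_closure_mX (d := d.+1)) => [x x_prod|]; last first.
      by rewrite (eq_wdeg _ (mnmE _)).
    by apply/gen_idealS; apply: prod_set_mono x_prod => _ [i ->]; apply: Ilam_pure_power.
  move/(normal d.+1 isT)/(msupp_ideal_pow_deg1_decomposable worder_ge_Ilam) => /(_ m).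
  by rewrite msuppX mem_seq1 eqxx => /(_ isT); apply: eq_deg1_decomposable; apply: mnmE.
have f_ord : worder_ge lam (k * lamprod lam) f.
  apply: worder_ge_int_closure f_cl => x; apply: worder_ge_ideal_pow => y.
  exact: worder_ge_Ilam.
rewrite [f]mpolyE; apply: gen_ideal_sum => m m_supp.
rewrite -mul_mpolyC; apply: gen_idealM; apply/ideal_pow_Ilam_mX/decomp.
exact: worder_ge_msupp f_ord m_supp.
Qed.

End IlamMonomials.

Theorem lemma5p3 (K : fieldType) (n : nat) (lam : 'I_n -> nat)
  (hlam : forall i, (0 < lam i)%N) :
  normal_ideal (Ilam K lam) <->
  (forall v : vecN n, min_gen lam v -> type3 v \/ type4 v -> v.2 = 1%N).
Proof. by rewrite (normal_IlamP K hlam) (deg1_decomposableP hlam). Qed.
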